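(* Let $S$ and $T$ be ordered trees and let $e\colon S\to T$ be an embedding. Then there exists a rigid surjection $f\colon T\to S$ such that $e$ is the injection of $f$.
   Context: A tree is a finite, non-empty partially ordered set $(T,\sqsubseteq_T)$ with a smallest element (the root) such that the set of predecessors of each element is linearly ordered; each node counts as its own predecessor and successor. For $v,w\in T$, $v\wedge_T w$ is the $\sqsubseteq_T$-largest common predecessor of $v$ and $w$. A tree is ordered if the set of immediate successors of each node carries a fixed linear order; this induces the lexicographic linear order $\leq_T$ on $T$: $v\leq_T w$ if $v\sqsubseteq_T w$, and for $\sqsubseteq_T$-incomparable $v,w$, $v\leq_T w$ iff the immediate successor of $v\wedge_T w$ below $v$ precedes the one below $w$. A morphism $e\colon S\to T$ of ordered trees satisfies $e(v\wedge_S w)=e(v)\wedge_T e(w)$, is monotone from $\leq_S$ to $\leq_T$, and maps root to root; an embedding is an injective morphism. A function $f\colon T\to S$ is a rigid surjection if there is a morphism $e\colon S\to T$ with $f\circ e={\rm id}_S$ and $e(f(w))\sqsubseteq_T w$ for all $w\in T$; such $e$ is unique and is called the injection of $f$. *)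

From mathcomp Require Import all_boot.
Set Implicit Arguments. Unset Strict Implicit. Unset Printing Implicit Defensive.

Definition tree_axioms (T : finType) (le : rel T) (r : T) : Prop :=
  [/\ reflexive le, antisymmetric le, transitive le,
      (forall v, le r v) &
      (forall v x y, le x v -> le y v -> le x y || le y x)].

Definition imm_succ (T : finType) (le : rel T) (v w : T) : bool :=
  [&& le v w, v != w &
      [forall u, (le v u && le u w) ==> ((u == v) || (u == w))]].

Definition sibling_order_axioms (T : finType) (le : rel T) (sib : rel T) : Prop :=
  forall v x y z, imm_succ le v x -> imm_succ le v y -> imm_succ le v z ->
    [/\ sib x x, (sib x y -> sib y x -> x = y),
        (sib x y -> sib y z -> sib x z) & (sib x y || sib y x)].

Record otree := OTree {
  ocar :> finType;
  ole : rel ocar;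
  oroot : ocar;
  osib : rel ocar;
  otree_ax : tree_axioms ole oroot;
  osib_ax : sibling_order_axioms ole osib
}.

Section OTreeOps.
Variable T : otree.

Definition is_meet (v w m : T) : bool :=
  [&& ole m v, ole m w & [forall u, (ole u v && ole u w) ==> ole u m]].

Definition omeet (v w : T) : T :=
  if [pick m | is_meet v w m] is Some m then m else oroot T.

Definition olex (v w : T) : bool :=
  ole v w ||
  [&& ~~ ole v w, ~~ ole w v &
      [exists c, exists d,
         [&& imm_succ (@ole T) (omeet v w) c, imm_succ (@ole T) (omeet v w) d,
             ole c v, ole d w & osib c d]]].
End OTreeOps.

Definition otree_morphism (S T : otree) (e : S -> T) : Prop :=
  [/\ (forall v w, e (omeet v w) = omeet (e v) (e w)),
      (forall v w, olex v w -> olex (e v) (e w)) &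
      e (oroot S) = oroot T].

Definition otree_embedding (S T : otree) (e : S -> T) : Prop :=
  otree_morphism e /\ injective e.

Definition injection_of (S T : otree) (f : T -> S) (e : S -> T) : Prop :=
  [/\ otree_morphism e, (forall s, f (e s) = s) & (forall w, ole (e (f w)) w)].

Definition rigid_surjection (S T : otree) (f : T -> S) : Prop :=
  exists e : S -> T, injection_of f e.

From mathcomp Require Import all_boot.
Set Implicit Arguments. Unset Strict Implicit. Unset Printing Implicit Defensive.

(* The predecessors of any node form a chain, so the nodes of the image e(S)
   lying below w form a chain containing the root; f(w) is the node of S whose
   image is the top of that chain, found as the one of maximal depth. Then
   e (f w) ⊑ w by construction, and f (e s) = s because e s itself is the top
   of the chain below e s. *)

Section TreeDepth.

Variables (T : finType) (le : rel T) (r : T).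
Hypothesis treeT : tree_axioms le r.

Definition depth (v : T) : nat := #|[pred u | le u v]|.

Lemma depth_le_eq (u v : T) : le u v -> depth v <= depth u -> u = v.
Proof.
have [refl _ trans _ _] := treeT; move=> le_uv depth_vu.
have sub : [pred x | le x u] \subset [pred x | le x v].
  by apply/subsetP => x; rewrite !inE => le_xu; apply: trans le_uv.
have eq_depth : depth u = depth v by apply/eqP; rewrite eqn_leq subset_leq_card.
have /(_ v) := subset_cardP eq_depth sub; rewrite !inE refl => le_vu.
by have [_ antisym _ _ _] := treeT; apply: antisym; rewrite le_uv le_vu.
Qed.

Variables (I : finType) (g : I -> T) (i0 : I) (w : T).
Hypothesis le_g_i0 : le (g i0) w.

Definition deepest_below : I := [arg max_(i > i0 | le (g i) w) depth (g i)].

Lemma deepest_below_le : le (g deepest_below) w.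
Proof. by rewrite /deepest_below; case: arg_maxnP. Qed.

Lemma le_deepest_below (j : I) : le (g j) w -> le (g j) (g deepest_below).
Proof.
rewrite /deepest_below; case: arg_maxnP => // i le_iw i_max le_jw.
have [refl _ _ _ chain] := treeT.
have /orP [//|le_ij] := chain _ _ _ le_jw le_iw.
by rewrite -(depth_le_eq le_ij (i_max j le_jw)) refl.
Qed.

End TreeDepth.

Definition retraction (S T : otree) (e : S -> T) (w : T) : S :=
  deepest_below (@ole T) e (oroot S) w.

Lemma retraction_injection (S T : otree) (e : S -> T) :
  otree_embedding e -> injection_of (retraction e) e.
Proof.
move=> [emorph e_inj]; have [_ _ e_root] := emorph.
have treeT := otree_ax T; have [refl antisym _ le_root _] := treeT.
have below w : ole (e (oroot S)) w by rewrite e_root le_root.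
split => // [s | w]; last exact: deepest_below_le (below w).
apply: e_inj; apply: antisym.
rewrite /retraction deepest_below_le //=; exact: (le_deepest_below treeT).
Qed.

Theorem lemma2p3 (S T : otree) (e : S -> T) :
  otree_embedding e ->
  exists f : T -> S, rigid_surjection f /\ injection_of f e.
Proof.
move=> e_emb; have inj := retraction_injection e_emb.
by exists (retraction e); split => //; exists e.
Qed.
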